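(* Let $G$ be a chordal graph and let $\{C_1,\dots,C_k\}$ be a perfect ordering of its maximal cliques. Define $c:=\max_{i}|C_i|=\omega(G)$ and $s:=\max_i|S_i|$, where $S_i:=(C_1\cup\dots\cup C_{i-1})\cap C_i$ (with $S_1=\emptyset$). If $f:\mathbb{R}\to\mathbb{R}$ is such that $f[-]$ preserves positivity on $\mathcal{P}_{K_c}$ and is Loewner super-additive on $\mathcal{P}_{K_s}$, then $f[-]$ preserves positivity on $\mathcal{P}_G$.
   Context: Graphs are finite and simple; chordal means every cycle on at least four vertices has a chord; $\omega(G)$ is the clique number; $K_m$ is the complete graph on $m$ vertices. For a sequence $B_1,\dots,B_k$ of vertex subsets, set $H_j=B_1\cup\dots\cup B_j$ ($H_0=\emptyset$), $S_j=H_{j-1}\cap B_j$; the sequence is a perfect ordering if (i) for every $1<i\le k$ there is $j<i$ with $S_i\subset B_j$, and (ii) each $S_i$ induces a complete graph. For a graph $H$ on $\{1,\dots,n\}$, $\mathcal{P}_H$ is the set of real symmetric positive semidefinite $n\times n$ matrices $M$ with $m_{ij}=0$ whenever $i\neq j$ and $(i,j)$ is not an edge (so $\mathcal{P}_{K_n}$ is all $n\times n$ PSD matrices). $f[M]:=(f(m_{ij}))$; $f[-]$ preserves positivity on $\mathcal{P}_H$ if $f[M]\in\mathcal{P}_H$ for all $M\in\mathcal{P}_H$. Loewner super-additivity on $\mathcal{P}_H$ is defined for $f$ with $f(0)=0$: $f[M+N]-f[M]-f[N]\in\mathcal{P}_H$ for all $M,N\in\mathcal{P}_H$. *)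

From HB Require Import structures.
From mathcomp Require Import all_boot all_order all_algebra.
From mathcomp Require Import reals.
Set Implicit Arguments. Unset Strict Implicit. Unset Printing Implicit Defensive.
Import Order.TTheory GRing.Theory Num.Theory.
Local Open Scope ring_scope.

Definition simple_graph (n : nat) (e : rel 'I_n) : Prop :=
  (forall x, ~~ e x x) /\ (forall x y, e x y = e y x).

Definition complete_rel (m : nat) : rel 'I_m := fun x y => x != y.

(* Chordal: every cycle on at least four (distinct) vertices has a chord,
   i.e. an edge between two vertices of the cycle that are not consecutive
   on the cycle. *)
Definition chordal (n : nat) (e : rel 'I_n) : Prop :=
  forall s : seq 'I_n, uniq s -> (4 <= size s)%N -> cycle e s ->
    exists x y, [/\ x \in s, y \in s, x != y, e x y &
      (
      index y s != ((index x s).+1 %% size s)%N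
      /\ index x s != ((index y s).+1 %% size s)%N)].

Definition is_clique (n : nat) (e : rel 'I_n) (C : {set 'I_n}) : Prop :=
  forall x y, x \in C -> y \in C -> x != y -> e x y.

Definition maximal_clique (n : nat) (e : rel 'I_n) (C : {set 'I_n}) : Prop :=
  is_clique e C /\ (forall D : {set 'I_n}, is_clique e D -> C \subset D -> D = C).

(* Perfect orderings of a sequence B_1,...,B_k of vertex subsets
   (0-based indices here).  H_j = B_1 u ... u B_j, S_i = H_{i-1} n B_i. *)
Definition Hset (n : nat) (B : seq {set 'I_n}) (j : nat) : {set 'I_n} :=
  \bigcup_(l < j) nth set0 B l.

Definition Sset (n : nat) (B : seq {set 'I_n}) (i : nat) : {set 'I_n} :=
  Hset B i :&: nth set0 B i.

Definition perfect_ordering (n : nat) (e : rel 'I_n) (B : seq {set 'I_n}) : Prop :=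
  (forall i, (0 < i < size B)%N ->
     exists2 j, (j < i)%N & Sset B i \subset nth set0 B j)
  /\ (forall i, (i < size B)%N -> is_clique e (Sset B i)).

Definition enum_max_cliques (n : nat) (e : rel 'I_n) (B : seq {set 'I_n}) : Prop :=
  uniq B /\ (forall C, C \in B <-> maximal_clique e C).

Definition psd (R : realType) (n : nat) (M : 'M[R]_n) : Prop :=
  M^T = M /\ (forall v : 'cV[R]_n, 0 <= (v^T *m M *m v) 0 0).

Definition inP (R : realType) (n : nat) (e : rel 'I_n) (M : 'M[R]_n) : Prop :=
  psd M /\ (forall i j, i != j -> ~~ e i j -> M i j = 0).

Definition entrywise (R : realType) (n : nat) (f : R -> R) (M : 'M[R]_n) : 'M[R]_n :=
  map_mx f M.

Definition preserves_positivity (R : realType) (n : nat) (e : rel 'I_n) (f : R -> R) : Prop :=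
  forall M : 'M[R]_n, inP e M -> inP e (entrywise f M).

Definition loewner_superadditive (R : realType) (n : nat) (e : rel 'I_n) (f : R -> R) : Prop :=
  f 0 = 0 /\
  (forall M N : 'M[R]_n, inP e M -> inP e N ->
    inP e (entrywise f (M + N) - entrywise f M - entrywise f N)).

(** Induct along the perfect ordering.  A matrix M of P_G is supported on pairs
    of vertices lying in a common maximal clique.  Pivoting out, one rank-one
    Schur complement at a time, the vertices of C_k that lie in no earlier
    clique writes M = M1 + M2 with M1, M2 positive semidefinite, M2 supported
    on C_k and M1 on the earlier cliques: what remains of M inside C_k lives on
    S_k, which is contained in an earlier clique.  Then
      f[M] = f[M1] + f[M2] + (f[M1 + M2] - f[M1] - f[M2]),
    where f[M1] is PSD by induction, f[M2] by positivity preservation on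
    K_|C_k| (a principal block of K_c), and the last term, supported on
    S_k x S_k because f 0 = 0, by super-additivity on K_|S_k|. *)

Set Warnings "-notation-overridden,-ambiguous-paths".
From mathcomp Require Import all_boot all_order all_algebra.
From mathcomp Require Import reals.
From mathcomp Require Import ring.
Set Implicit Arguments. Unset Strict Implicit. Unset Printing Implicit Defensive.
Import Order.TTheory GRing.Theory Num.Theory.
Local Open Scope ring_scope.

Lemma addmxE (V : nmodType) m n (A B : 'M[V]_(m, n)) i j : (A + B) i j = A i j + B i j.
Proof. by rewrite mxE. Qed.

Lemma oppmxE (V : zmodType) m n (A : 'M[V]_(m, n)) i j : (- A) i j = - A i j.
Proof. by rewrite mxE. Qed.

Lemma discriminant_le (R : realFieldType) (d a q : R) : 0 <= d ->
  (forall t, 0 <= t ^+ 2 * d + 2 * t * a + q) -> a ^+ 2 <= d * q.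
Proof.
rewrite le0r => /orP[/eqP-> h|d_gt0 h].
  have [->|a_neq0] := eqVneq a 0; first by rewrite expr0n mul0r.
  have := h (- (q + 1) / (2 * a)).
  by rewrite (_ : _ + _ = -1) ?ler0N1 //; field.
have := h (- a / d).
rewrite (_ : _ + _ = q - d^-1 * a ^+ 2); last by field; rewrite gt_eqF.
by rewrite subr_ge0 ler_pdivrMl.
Qed.

Definition mxform (R : realType) n (M : 'M[R]_n) (x y : 'cV[R]_n) : R :=
  (x^T *m M *m y) 0 0.

Section QuadraticForm.
Variables (R : realType) (n : nat).
Implicit Types (M : 'M[R]_n) (x y u : 'cV[R]_n).

Lemma mxform_delta M i j : mxform M (delta_mx i 0) (delta_mx j 0) = M i j.
Proof. by rewrite /mxform trmx_delta -rowE -colE !mxE. Qed.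

Lemma mxformDl M x y u : mxform M (x + y) u = mxform M x u + mxform M y u.
Proof. by rewrite /mxform linearD /= !mulmxDl addmxE. Qed.

Lemma mxformDr M x y u : mxform M u (x + y) = mxform M u x + mxform M u y.
Proof. by rewrite /mxform mulmxDr addmxE. Qed.

Lemma mxformBl M N x y : mxform (M - N) x y = mxform M x y - mxform N x y.
Proof. by rewrite /mxform mulmxBr mulmxBl addmxE oppmxE. Qed.

Lemma mxformZl M t x y : mxform M (t *: x) y = t * mxform M x y.
Proof. by rewrite /mxform linearZ /= -!scalemxAl mxE. Qed.

Lemma mxformZr M t x y : mxform M x (t *: y) = t * mxform M x y.
Proof. by rewrite /mxform -scalemxAr mxE. Qed.

Lemma mxformC M x y : M^T = M -> mxform M x y = mxform M y x.
Proof.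
move=> MT; rewrite /mxform -[in LHS](trmxK (x^T *m M *m y)) mxE.
by rewrite !trmx_mul trmxK MT mulmxA.
Qed.

Lemma mxform_conj m (P : 'M[R]_(m, n)) (M : 'M[R]_m) x y :
  mxform (P^T *m M *m P) x y = mxform M (P *m x) (P *m y).
Proof. by rewrite /mxform trmx_mul !mulmxA. Qed.

Lemma psd_sym M i j : psd M -> M i j = M j i.
Proof. by case=> MT _; rewrite -[in LHS]MT mxE. Qed.

Lemma psd_ge0 M x : psd M -> 0 <= mxform M x x.
Proof. by case=> _; apply. Qed.

Lemma psd_diag_ge0 M i : psd M -> 0 <= M i i.
Proof. by move/(psd_ge0 (delta_mx i 0)); rewrite mxform_delta. Qed.

Lemma psd_mxform_sqr_le M u x : psd M -> mxform M u x ^+ 2 <= mxform M u u * mxform M x x.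
Proof.
move=> psdM; apply: discriminant_le (psd_ge0 u psdM) _ => t.
have -> : t ^+ 2 * mxform M u u + 2 * t * mxform M u x + mxform M x x =
          mxform M (t *: u + x) (t *: u + x).
  by rewrite mxformDl !mxformDr !mxformZl !mxformZr (mxformC x u psdM.1); ring.
exact: psd_ge0.
Qed.

Lemma psd_zero_row M v j : psd M -> M v v = 0 -> M v j = 0.
Proof.
move=> psdM Mvv0; have := psd_mxform_sqr_le (delta_mx v 0) (delta_mx j 0) psdM.
rewrite !mxform_delta Mvv0 mul0r => sqr_le0.
by apply/eqP; rewrite -sqrf_eq0 eq_le sqr_le0 sqr_ge0.
Qed.

Lemma psd0 : psd (0 : 'M[R]_n).
Proof. by split=> [|x]; rewrite ?trmx0 // mulmx0 mul0mx mxE. Qed.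

Lemma psdD M N : psd M -> psd N -> psd (M + N).
Proof.
case=> MT M_ge0 [NT N_ge0]; split=> [|x]; first by rewrite linearD /= MT NT.
by rewrite mulmxDr mulmxDl addmxE addr_ge0.
Qed.

Lemma psd_conj m (P : 'M[R]_(m, n)) (M : 'M[R]_m) : psd M -> psd (P^T *m M *m P).
Proof.
case=> MT M_ge0; split=> [|x]; first by rewrite !trmx_mul trmxK MT mulmxA.
by rewrite -/(mxform _ x x) mxform_conj; apply: M_ge0.
Qed.

End QuadraticForm.

Section Pivot.
Variables (R : realType) (n : nat).
Implicit Types (M : 'M[R]_n) (x y : 'cV[R]_n).

(* If M v v = 0 then (M v v)^-1 = 0 and pivot_part M v = 0; for PSD M the
   row v then vanishes anyway (psd_zero_row). *)
Definition pivot_part M v : 'M[R]_n := (M v v)^-1 *: (col v M *m row v M).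

Lemma pivot_partE M v i j : pivot_part M v i j = (M v v)^-1 * (M i v * M v j).
Proof. by rewrite !mxE big_ord1 !mxE. Qed.

Lemma mxform_pivot_part M v x y : mxform (pivot_part M v) x y =
  (M v v)^-1 * (mxform M x (delta_mx v 0) * mxform M (delta_mx v 0) y).
Proof.
rewrite /mxform -scalemxAr -scalemxAl mxE colE rowE -[delta_mx 0 v]trmx_delta.
congr (_ * _); set e : 'cV[R]_n := delta_mx v 0.
transitivity (((x^T *m M *m e) *m (e^T *m M *m y)) 0 0); first by rewrite !mulmxA.
by rewrite mxE big_ord1.
Qed.

Lemma tr_pivot_part M v : M^T = M -> (pivot_part M v)^T = pivot_part M v.
Proof. by move=> MT; rewrite linearZ /= trmx_mul tr_row tr_col MT. Qed.

Lemma psd_pivot_part M v : psd M -> psd (pivot_part M v).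
Proof.
move=> psdM; split=> [|x]; first exact: tr_pivot_part psdM.1.
rewrite -/(mxform _ x x) mxform_pivot_part (mxformC x _ psdM.1) -expr2.
by rewrite mulr_ge0 ?sqr_ge0 // invr_ge0 psd_diag_ge0.
Qed.

Lemma psd_sub_pivot_part M v : psd M -> psd (M - pivot_part M v).
Proof.
move=> psdM; split=> [|x].
  by rewrite linearB /= tr_pivot_part psdM.1.
rewrite -/(mxform _ x x) mxformBl mxform_pivot_part (mxformC x _ psdM.1) -expr2 subr_ge0.
have [->|Mvv_neq0] := eqVneq (M v v) 0; first by rewrite invr0 mul0r psd_ge0.
rewrite ler_pdivrMl ?lt0r ?Mvv_neq0 ?psd_diag_ge0 //.
by have := psd_mxform_sqr_le (delta_mx v 0) x psdM; rewrite mxform_delta.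
Qed.

Lemma pivot_part_row M v j : psd M -> (M - pivot_part M v) v j = 0.
Proof.
move=> psdM; rewrite addmxE oppmxE pivot_partE.
have [Mvv0|Mvv_neq0] := eqVneq (M v v) 0.
  by rewrite (psd_zero_row j psdM Mvv0) !mulr0 subr0.
by rewrite mulKf ?subrr.
Qed.

End Pivot.

Definition supported_on (R : realType) n (A : 'M[R]_n) (r : rel 'I_n) : Prop :=
  forall i j, A i j != 0 -> r i j.

Definition block_rel n (X : {set 'I_n}) : rel 'I_n :=
  fun i j => (i \in X) && (j \in X).

Lemma psd_split_rows (R : realType) n (M : 'M[R]_n) (X : {set 'I_n}) (s : seq 'I_n) :
  psd M -> (forall u j, u \in s -> M u j != 0 -> j \in X) ->
  exists2 N, psd N & [/\ psd (M - N), supported_on N (block_rel X) &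
                         forall u j, u \in s -> (M - N) u j = 0].
Proof.
move=> psdM; elim: s => [|v s IHs] rowsX.
  exists 0; first exact: psd0.
  by split=> [|i j|//]; rewrite ?subr0 // mxE eqxx.
have [|N psdN [psdL suppN rowsL]] := IHs.
  by move=> u j us; apply: rowsX; rewrite inE us orbT.
set L := M - N in psdL rowsL *.
have rowvX j : L v j != 0 -> j \in X.
  rewrite addmxE oppmxE; have [Mvj0|Mvj] := eqVneq (M v j) 0; last first.
    by rewrite (rowsX v j (mem_head v s)).
  by rewrite Mvj0 sub0r oppr_eq0 => /suppN /andP[].
exists (N + pivot_part L v); first exact: psdD (psd_pivot_part v psdL).
rewrite opprD addrA -/L; split=> [|i j|u j].
- exact: psd_sub_pivot_part.
- rewrite addmxE pivot_partE; have [/eqP->|/suppN//] := boolP (N i j == 0).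
  rewrite add0r !mulf_eq0 !negb_or => /and3P[_ Liv Lvj].
  by rewrite /block_rel !rowvX // (psd_sym v i psdL).
- rewrite inE => /orP[/eqP->|us]; first exact: pivot_part_row.
  by rewrite addmxE oppmxE pivot_partE !(rowsL u) // mul0r mulr0 subrr.
Qed.

Section Reindex.
Variables (R : realType) (p q : nat) (g : 'I_p -> 'I_q).

Definition embed_mx : 'M[R]_(q, p) := colsub g 1%:M.

Lemma mxsub_conj (A : 'M[R]_q) : mxsub g g A = embed_mx^T *m A *m embed_mx.
Proof. by rewrite trmx_mxsub trmx1 mul_rowsub_mx mul1mx -mxsub_mul mulmx1. Qed.

Lemma psd_mxsub (A : 'M[R]_q) : psd A -> psd (mxsub g g A).
Proof. by rewrite mxsub_conj; apply: psd_conj. Qed.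

Lemma psd_embed (B : 'M[R]_p) : psd B -> psd (embed_mx *m B *m embed_mx^T).
Proof. by move/(psd_conj embed_mx^T); rewrite trmxK. Qed.

Lemma embed_conj_row_notin (B : 'M[R]_p) i j :
  i \notin codom g -> (embed_mx *m B *m embed_mx^T) i j = 0.
Proof.
move=> i_notin; have row0 : row i embed_mx = 0.
  apply/rowP => a; rewrite !mxE; case: eqP => // i_eq.
  by rewrite i_eq codom_f in i_notin.
have -> : (embed_mx *m B *m embed_mx^T) i j = row i (embed_mx *m B *m embed_mx^T) 0 j.
  by rewrite [RHS]mxE.
by rewrite !row_mul row0 !mul0mx mxE.
Qed.

Lemma embed_conj_notin (B : 'M[R]_p) i j :
  (i \notin codom g) || (j \notin codom g) -> (embed_mx *m B *m embed_mx^T) i j = 0.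
Proof.
case/orP=> [/embed_conj_row_notin//|j_notin].
have -> : (embed_mx *m B *m embed_mx^T) i j = (embed_mx *m B *m embed_mx^T)^T j i.
  by rewrite [RHS]mxE.
rewrite !trmx_mul trmxK mulmxA.
exact: embed_conj_row_notin.
Qed.

Hypothesis g_inj : injective g.

Lemma embed_mx_tr_mul : embed_mx^T *m embed_mx = 1%:M.
Proof.
rewrite trmx_mxsub trmx1 -mxsub_mul mul1mx.
by apply/matrixP => a b; rewrite !mxE (inj_eq g_inj).
Qed.

Lemma mxsub_embed (B : 'M[R]_p) : mxsub g g (embed_mx *m B *m embed_mx^T) = B.
Proof.
by rewrite mxsub_conj !mulmxA embed_mx_tr_mul mul1mx -mulmxA embed_mx_tr_mul mulmx1.
Qed.

Lemma embed_mxsub (A : 'M[R]_q) :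
  (forall i j, (i \notin codom g) || (j \notin codom g) -> A i j = 0) ->
  embed_mx *m mxsub g g A *m embed_mx^T = A.
Proof.
move=> A_out; apply/matrixP => i j.
have [/andP[/codomP[a ->] /codomP[b ->]]|out] := boolP ((i \in codom g) && (j \in codom g)).
  have /matrixP/(_ a b) := mxsub_embed (mxsub g g A).
  by rewrite [LHS]mxE [RHS]mxE.
by rewrite embed_conj_notin ?A_out // -negb_and.
Qed.

End Reindex.

Lemma codom_enum_val (T : finType) (X : {set T}) x :
  (x \in codom (@enum_val T (mem X))) = (x \in X).
Proof.
apply/codomP/idP => [[a ->]|xX]; first exact: enum_valP.
by exists (enum_rank_in xX x); rewrite enum_rankK_in.
Qed.

Lemma widen_ord_inj n m (le_nm : (n <= m)%N) : injective (widen_ord le_nm).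
Proof. by move=> a b /(congr1 val) /= /val_inj. Qed.

Section EntrywiseTransfer.
Variables (R : realType) (f : R -> R).

Definition additivity_defect n (A B : 'M[R]_n) : 'M[R]_n :=
  entrywise f (A + B) - entrywise f A - entrywise f B.

Lemma additivity_defectE n (A B : 'M[R]_n) i j :
  additivity_defect A B i j = f (A i j + B i j) - f (A i j) - f (B i j).
Proof. by rewrite /additivity_defect !mxE. Qed.

Lemma entrywise_mxsub p q (g : 'I_p -> 'I_q) (A : 'M[R]_q) :
  entrywise f (mxsub g g A) = mxsub g g (entrywise f A).
Proof. exact: map_mxsub. Qed.

Lemma additivity_defect_mxsub p q (g : 'I_p -> 'I_q) (A B : 'M[R]_q) :
  additivity_defect (mxsub g g A) (mxsub g g B) = mxsub g g (additivity_defect A B).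
Proof. by rewrite /additivity_defect -raddfD !entrywise_mxsub -!raddfB. Qed.

Lemma inP_complete m (A : 'M[R]_m) : inP (@complete_rel m) A <-> psd A.
Proof. by split=> [[]//|psdA]; split=> // i j ij; rewrite /complete_rel ij. Qed.

Lemma preserves_positivity_complete_le p m : (p <= m)%N ->
  preserves_positivity (@complete_rel m) f -> preserves_positivity (@complete_rel p) f.
Proof.
move=> le_pm pos B /inP_complete psdB; apply/inP_complete.
rewrite -(mxsub_embed (@widen_ord_inj _ _ le_pm) B) entrywise_mxsub.
by apply/psd_mxsub/inP_complete/pos/inP_complete/psd_embed.
Qed.

Lemma loewner_superadditive_complete_le p m : (p <= m)%N ->
  loewner_superadditive (@complete_rel m) f -> loewner_superadditive (@complete_rel p) f.
Proof.
move=> le_pm [f0 sup]; split=> // B1 B2 /inP_complete psdB1 /inP_complete psdB2.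
apply/inP_complete; rewrite -/(additivity_defect B1 B2).
have inj := @widen_ord_inj _ _ le_pm.
rewrite -(mxsub_embed inj B1) -(mxsub_embed inj B2) additivity_defect_mxsub.
by apply/psd_mxsub/inP_complete/sup; apply/inP_complete/psd_embed.
Qed.

Lemma psd_entrywise_block n m (X : {set 'I_n}) (A : 'M[R]_n) :
  f 0 = 0 -> preserves_positivity (@complete_rel m) f -> (#|X| <= m)%N ->
  psd A -> supported_on A (block_rel X) -> psd (entrywise f A).
Proof.
move=> f0 pos le_Xm psdA suppA.
have inj := @enum_val_inj _ (mem X).
rewrite -(embed_mxsub inj (A := entrywise f A)); last first.
  move=> i j; rewrite !codom_enum_val -negb_and => out.
  by rewrite mxE (_ : A i j = 0) //; apply/eqP; apply: contraNT out => /suppA.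
apply/psd_embed; rewrite -entrywise_mxsub.
apply/inP_complete/(preserves_positivity_complete_le le_Xm pos)/inP_complete.
exact: psd_mxsub.
Qed.

Lemma psd_additivity_defect_block n m (X : {set 'I_n}) (A B : 'M[R]_n) :
  loewner_superadditive (@complete_rel m) f -> (#|X| <= m)%N -> psd A -> psd B ->
  (forall i j, A i j != 0 -> B i j != 0 -> block_rel X i j) ->
  psd (additivity_defect A B).
Proof.
move=> sup le_Xm psdA psdB suppAB.
have [f0 sup'] := loewner_superadditive_complete_le le_Xm sup.
have inj := @enum_val_inj _ (mem X).
rewrite -(embed_mxsub inj (A := additivity_defect A B)); last first.
  move=> i j; rewrite !codom_enum_val -negb_and additivity_defectE => out.
  have [Aij0|/suppAB Bij] := eqVneq (A i j) 0.
    by rewrite Aij0 add0r f0 subr0 subrr.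
  have [Bij0|/Bij ij_in] := eqVneq (B i j) 0; last by case/negP: out.
  by rewrite Bij0 addr0 f0 subr0 subrr.
apply/psd_embed; rewrite -additivity_defect_mxsub.
by apply/inP_complete/sup'; apply/inP_complete/psd_mxsub.
Qed.

End EntrywiseTransfer.

Definition cover_rel n (C : seq {set 'I_n}) (k : nat) : rel 'I_n :=
  fun i j => [exists l : 'I_k, (i \in nth set0 C l) && (j \in nth set0 C l)].

Section Cover.
Variables (n : nat) (C : seq {set 'I_n}).

Lemma cover_relS k i j :
  cover_rel C k.+1 i j = cover_rel C k i j || block_rel (nth set0 C k) i j.
Proof.
apply/existsP/orP => [[l ijl]|[/existsP[l ijl]|ijk]].
- have [lk|kl] := ltnP l k; first by left; apply/existsP; exists (Ordinal lk).
  by right; rewrite -(@anti_leq l k) // -ltnS ltn_ord.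
- by exists (widen_ord (leqnSn k) l).
- by exists ord_max.
Qed.

Lemma cover_rel_Hset k i j :
  cover_rel C k i j -> (i \in Hset C k) && (j \in Hset C k).
Proof. by case/existsP=> l /andP[il jl]; apply/andP; split; apply/bigcupP; exists l. Qed.

Lemma Sset_cover_rel k i j :
  (forall l, (0 < l < size C)%N -> exists2 j, (j < l)%N & Sset C l \subset nth set0 C j) ->
  i \in Sset C k -> j \in Sset C k -> cover_rel C k i j.
Proof.
move=> perfectC iS jS; move: (iS) (jS); rewrite /Sset !inE => /andP[iH iC] /andP[_ jC].
have k_gt0 : (0 < k)%N by move: iH; case: (k) => //; rewrite /Hset big_ord0 inE.
have k_lt : (k < size C)%N.
  by rewrite ltnNge; apply/negP => /(nth_default set0) Ck0; rewrite Ck0 inE in iC.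
have [l lk sub] := perfectC k (introT andP (conj k_gt0 k_lt)).
by apply/existsP; exists (Ordinal lk); rewrite /= !(subsetP sub).
Qed.

End Cover.

Section PerfectOrdering.
Variables (R : realType) (n : nat) (C : seq {set 'I_n}) (f : R -> R) (c s : nat).
Hypothesis perfectC : forall l, (0 < l < size C)%N ->
  exists2 j, (j < l)%N & Sset C l \subset nth set0 C j.

Lemma psd_split_cover k (M : 'M[R]_n) : psd M -> supported_on M (cover_rel C k.+1) ->
  exists2 N, psd N & [/\ psd (M - N), supported_on N (block_rel (nth set0 C k)) &
                         supported_on (M - N) (cover_rel C k)].
Proof.
set Ck := nth set0 C k; set Hk := Hset C k => psdM suppM.
have [|N psdN [psdL suppN rowsL]] := psd_split_rows (X := Ck) (s := enum (Ck :\: Hk)) psdM.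
  move=> u j; rewrite mem_enum !inE => /andP[uH _] /suppM.
  rewrite cover_relS => /orP[/cover_rel_Hset/andP[uH' _]|/andP[]//].
  by rewrite uH' in uH.
exists N => //; split=> // i j Lij.
have in_Hk u v : u \in Ck -> (M - N) u v != 0 -> u \in Hk.
  move=> uC; apply: contraNT => uH.
  by rewrite rowsL ?mem_enum ?inE ?uH.
have [/andP[iC jC]|out] := boolP (block_rel Ck i j).
  apply: Sset_cover_rel perfectC _ _; rewrite /Sset -/Hk -/Ck inE ?iC ?jC ?andbT.
    exact: in_Hk Lij.
  by apply: (in_Hk j i jC); rewrite (psd_sym j i psdL).
have Nij0 : N i j = 0 by apply/eqP; apply: contraNT out => /suppN.
move: Lij; rewrite addmxE oppmxE Nij0 subr0 => /suppM.
by rewrite cover_relS (negbTE out) orbF.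
Qed.

Hypothesis pos : preserves_positivity (@complete_rel c) f.
Hypothesis sup : loewner_superadditive (@complete_rel s) f.
Hypothesis C_le_c : forall l, (l < size C)%N -> (#|nth set0 C l| <= c)%N.
Hypothesis S_le_s : forall l, (l < size C)%N -> (#|Sset C l| <= s)%N.

Lemma psd_entrywise_cover k (M : 'M[R]_n) : (k <= size C)%N ->
  psd M -> supported_on M (cover_rel C k) -> psd (entrywise f M).
Proof.
have f0 : f 0 = 0 := sup.1.
elim: k M => [|k IHk] M k_le psdM suppM.
  have -> : entrywise f M = 0.
    apply/matrixP => i j; rewrite !mxE; have [->//|/suppM] := eqVneq (M i j) 0.
    by case/existsP=> [[]].
  exact: psd0.
have [N psdN [psdL suppN suppL]] := psd_split_cover psdM suppM.
have -> : entrywise f M =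
    entrywise f (M - N) + entrywise f N + additivity_defect f (M - N) N.
  by rewrite /additivity_defect subrK [RHS]addrC !addrA addrAC !subrK.
apply: psdD; first apply: psdD.
- exact: IHk (ltnW k_le) psdL suppL.
- exact: psd_entrywise_block f0 pos (C_le_c k_le) psdN suppN.
- apply: psd_additivity_defect_block sup (S_le_s k_le) psdL psdN _ => i j Lij Nij.
  have /andP[iH jH] := cover_rel_Hset (suppL i j Lij).
  have /andP[iC jC] := suppN i j Nij.
  by rewrite /block_rel /Sset !inE iH jH iC jC.
Qed.

End PerfectOrdering.

Lemma is_cliqueP n (e : rel 'I_n) (D : {set 'I_n}) :
  reflect (is_clique e D) [forall x in D, forall y in D, (x != y) ==> e x y].
Proof.
apply: (iffP forall_inP) => [cliqueD x y xD yD xy|cliqueD x xD].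
  by move/forall_inP: (cliqueD x xD) => /(_ y yD)/implyP; apply.
by apply/forall_inP => y yD; apply/implyP; apply: cliqueD.
Qed.

Lemma max_clique_cover n (e : rel 'I_n) (C : seq {set 'I_n}) (D : {set 'I_n}) :
  enum_max_cliques e C -> is_clique e D ->
  exists2 l, (l < size C)%N & D \subset nth set0 C l.
Proof.
move=> [_ maxC] /is_cliqueP cliqueD.
have [A /maxsetP[/is_cliqueP cliqueA maxA] DA] :=
  @maxset_exists _ (fun B => [forall x in B, forall y in B, (x != y) ==> e x y]) D cliqueD.
have AC : A \in C.
  by apply/maxC; split=> // B /is_cliqueP cliqueB AB; apply: maxA.
by exists (index A C); rewrite ?index_mem ?nth_index.
Qed.

Lemma inP_supported_cover (R : realType) n (e : rel 'I_n) (C : seq {set 'I_n})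
    (M : 'M[R]_n) :
  enum_max_cliques e C -> inP e M -> supported_on M (cover_rel C (size C)).
Proof.
move=> maxC [psdM M_off] i j Mij.
have edge x y : x != y -> M x y != 0 -> e x y.
  by move=> xy; apply: contraNT => /(M_off _ _ xy)->.
have cliqueij : is_clique e [set i; j].
  move=> x y; rewrite !inE => /orP[]/eqP-> /orP[]/eqP-> xy; rewrite ?eqxx // in xy.
    exact: edge.
  by apply: edge; rewrite // (psd_sym j i psdM).
have [l lC sub] := max_clique_cover maxC cliqueij.
by apply/existsP; exists (Ordinal lC); rewrite /= !(subsetP sub) // !inE eqxx ?orbT.
Qed.

Unset Implicit Arguments.

Theorem corollary3p8 (R : realType) (n : nat) (e : rel 'I_n)
  (C : seq {set 'I_n}) (f : R -> R) :
  simple_graph e -> chordal e ->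
  enum_max_cliques e C -> perfect_ordering e C ->
  let c := (\max_(i < size C) #|nth set0 C i|)%N in
  let s := (\max_(i < size C) #|Sset C i|)%N in
  preserves_positivity (@complete_rel c) f ->
  loewner_superadditive (@complete_rel s) f ->
  preserves_positivity e f.
Proof.
move=> _ _ maxC [perfectC _] c s pos sup M inPM; split; last first.
  by move=> i j ij nij; rewrite mxE inPM.2 // sup.1.
apply: (psd_entrywise_cover perfectC pos sup _ _ (leqnn _) inPM.1).
- by move=> l lC; exact: (@leq_bigmax _ (fun i : 'I_(size C) => #|nth set0 C i|) (Ordinal lC)).
- by move=> l lC; exact: (@leq_bigmax _ (fun i : 'I_(size C) => #|Sset C i|) (Ordinal lC)).
- exact: inP_supported_cover maxC inPM.
Qed.
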